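(* Let $A,B\in\mathbb{Z}$ with $-1\leq A\leq B$, $B\geq 2$ and $2A<B+3$. Let $\mathcal{S}$ be the neighbor set of $T$ and $\mathcal{S}^{\ell}$ the neighbor set of $T^{\ell}$. Then $\mathcal{S}\subset\mathcal{S}^{\ell}\cup\{c\}\cup\mathcal{S}^{\ell}c$, where $\mathcal{S}^{\ell}c=\{s\circ c: s\in\mathcal{S}^{\ell}\}$.
   Context: Let $a(x,y)=(x+1,y)$, $b(x,y)=(x,y+1)$, $c(x,y)=(-x,-y)$ and let $\Gamma=\{a^pb^qc^r: p,q\in\mathbb{Z},\ r\in\{0,1\}\}$ (products are compositions). Let $M=\begin{pmatrix}0&-B\\1&-A\end{pmatrix}$, $g(\mathbf{x})=M\mathbf{x}+\left(\frac{B-1}{2},0\right)^T$, $\mathcal{D}=\{id,a,\dots,a^{B-2},c\}$ if $B\geq3$ and $\mathcal{D}=\{id,c\}$ if $B=2$, and let $T$ be the unique nonempty compact set with $g(T)=\bigcup_{\delta\in\mathcal{D}}\delta(T)$. Let $T^{\ell}$ be the unique nonempty compact set with $MT^{\ell}=\bigcup_{k=0}^{B-1}\left(T^{\ell}+(k,0)^T\right)$. The neighbor set of $T$ is $\mathcal{S}=\{\gamma\in\Gamma\setminus\{id\}: T\cap\gamma(T)\neq\emptyset\}$; the neighbor set of $T^{\ell}$ is $\mathcal{S}^{\ell}=\{a^pb^q\neq id: T^{\ell}\cap a^pb^q(T^{\ell})\neq\emptyset\}$ (translations by nonzero integer vectors $(p,q)$). *)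

From HB Require Import structures.
From mathcomp Require Import all_boot all_order all_algebra.
From mathcomp Require Import all_classical all_reals all_analysis.
Set Implicit Arguments. Unset Strict Implicit. Unset Printing Implicit Defensive.
Import Order.TTheory GRing.Theory Num.Theory.
Import numFieldNormedType.Exports.
Local Open Scope classical_set_scope.
Local Open Scope ring_scope.

Section Defs.
Variable R : realType.
Notation pt := (R * R)%type.

Definition amap (z : pt) : pt := (z.1 + 1, z.2).
Definition bmap (z : pt) : pt := (z.1, z.2 + 1).
Definition cmap (z : pt) : pt := (- z.1, - z.2).

Definition transl (p q : int) (z : pt) : pt := (z.1 + p%:~R, z.2 + q%:~R).

(* the element a^p b^q c^r of Gamma (r = true means r = 1), as a map
   (composition: c^r is applied first) *)
Definition gmap (g : int * int * bool) : pt -> pt :=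
  let: (p, q, r) := g in
  if r then transl p q \o cmap else transl p q.

Definition Mmap (A B : int) (z : pt) : pt :=
  (0 * z.1 - B%:~R * z.2, z.1 - A%:~R * z.2).
Definition gaff (A B : int) (z : pt) : pt :=
  ((Mmap A B z).1 + (B%:~R - 1) / 2, (Mmap A B z).2).

(* T is a (the) nonempty compact set with g(T) = U_{delta in D} delta(T),
   D = {id, a, ..., a^(B-2), c} (= {id, c} when B = 2) *)
Definition is_T (A B : int) (T : set pt) : Prop :=
  T !=set0 /\ compact T /\
  gaff A B @` T =
    [set z | exists k : nat, (k%:Z <= B - 2)%R /\ z \in transl k%:Z 0 @` T]
    `|` cmap @` T.

Definition is_Tl (A B : int) (Tl : set pt) : Prop :=
  Tl !=set0 /\ compact Tl /\
  Mmap A B @` Tl =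
    [set z | exists k : nat, (k%:Z <= B - 1)%R /\ z \in transl k%:Z 0 @` Tl].

Definition nbr (T : set pt) : set (int * int * bool) :=
  [set g | g != (0, 0, false) /\ (T `&` gmap g @` T) !=set0].

Definition nbrl (Tl : set pt) : set (int * int) :=
  [set pq | pq != (0, 0) /\ (Tl `&` transl pq.1 pq.2 @` Tl) !=set0].

End Defs.

(* Let w be the opposite of the fixed point of g, and Y := (T u -T) + w.
   Since g(T) and g(-T) are made of translates of T and -T by integer
   multiples of (1,0), one checks M Y <= Y + {0, ..., B-1} x {0}: Y is a
   bounded sub-invariant set of the digit system of T^l.  The hypotheses on
   A and B provide a positive definite quadratic form Q with Q(M d) >= 2 Q(d);
   since T^l also satisfies T^l + {0, ..., B-1} x {0} <= M T^l, following
   the digit expansion of a point of Y for n steps produces a point of T^l at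
   Q-distance O(2^-n), so Y <= T^l by closedness.  A point in T /\ (T + v)
   or in T /\ (-T + v) then yields, after shifting by w, a point of
   T^l /\ (T^l + v). *)

From HB Require Import structures.
From mathcomp Require Import all_boot all_order all_algebra.
From mathcomp Require Import all_classical all_reals all_analysis.
From mathcomp Require Import zify ring lra.
Import Order.TTheory GRing.Theory Num.Theory.
Import numFieldNormedType.Exports.
Set Implicit Arguments.
Unset Strict Implicit.
Unset Printing Implicit Defensive.

Local Open Scope classical_set_scope.
Local Open Scope ring_scope.

Section ExpandingQuadraticForm.
Variable R : realType.
Implicit Types (a b qa qb k : R) (d : R * R).

Definition qform qa qb d : R := d.1 ^+ 2 + qa * d.1 * d.2 + qb * d.2 ^+ 2.

Definition expanding_qform a b qa qb k : Prop :=
  [/\ 0 < k, forall d, d.1 ^+ 2 + d.2 ^+ 2 <= k * qform qa qb d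
    & forall d, 2 * qform qa qb d <= qform qa qb (- b * d.2, d.1 - a * d.2)].

Lemma qform_le_square qa qb r d : `|d.1| <= r -> `|d.2| <= r ->
  qform qa qb d <= r ^+ 2 * (1 + `|qa| + `|qb|).
Proof.
move=> d1r d2r; have r0 : 0 <= r := le_trans (normr_ge0 _) d1r.
have sq_le x : `|x| <= r -> x ^+ 2 <= r ^+ 2.
  by move=> xr; rewrite -real_normK ?num_real // lerXn2r ?nnegrE.
rewrite /qform !mulrDr mulr1; apply: lerD; first apply: lerD.
- exact: sq_le.
- apply: le_trans (ler_norm _) _; rewrite -mulrA normrM mulrC ler_wpM2r //.
  by rewrite normrM expr2 ler_pM.
- apply: le_trans (ler_norm _) _; rewrite normrM mulrC ler_wpM2r //.
  by rewrite normrX real_normK ?num_real // sq_le.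
Qed.

(* For (qa, qb) = (-a, b) the form is multiplied by exactly b under the map. *)
Lemma expanding_qform_disc_lt0 a b : 2 <= b -> 1 <= 4 * b - a ^+ 2 ->
  expanding_qform a b (- a) b (6 + 2 * a ^+ 2).
Proof.
move=> b2 disc.
have Qge d : (d.1 - a * d.2 / 2) ^+ 2 + d.2 ^+ 2 / 4 <= qform (- a) b d.
  have -> : qform (- a) b d = (d.1 - a * d.2 / 2) ^+ 2 + d.2 ^+ 2 / 4
      + (4 * b - a ^+ 2 - 1) * d.2 ^+ 2 / 4 by rewrite /qform; field.
  have : 0 <= (4 * b - a ^+ 2 - 1) * d.2 ^+ 2 by rewrite mulr_ge0 ?sqr_ge0 ?subr_ge0.
  lra.
have Q0 d : 0 <= qform (- a) b d.
  by apply: le_trans (Qge d); rewrite addr_ge0 ?divr_ge0 ?sqr_ge0.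
split.
- by have := sqr_ge0 a; lra.
- move=> d; have := Qge d; have := sqr_ge0 (d.1 - a * d.2).
  have := sqr_ge0 a; have := mulr_ge0 (sqr_ge0 a) (Q0 d).
  have := mulr_ge0 (sqr_ge0 a) (sqr_ge0 (d.1 - a * d.2 / 2)); nra.
- move=> d; have -> : qform (- a) b (- b * d.2, d.1 - a * d.2) = b * qform (- a) b d.
    by rewrite /qform /=; ring.
  by rewrite ler_wpM2r.
Qed.

(* The identity behind the choice qb = s / 4 with s = b^2 - 2a^2 + 4:
   (qb - 2) (Q(M d) - 2 Q(d)) = ((qb - 2) d1 - a qb d2)^2 + (s^2 - 16 b^2) / 8 d2^2. *)
Lemma expanding_qform_disc_ge0 a b : 3 <= b -> 4 * b <= b ^+ 2 - 2 * a ^+ 2 + 4 ->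
  expanding_qform a b 0 ((b ^+ 2 - 2 * a ^+ 2 + 4) / 4) 1.
Proof.
set s := b ^+ 2 - 2 * a ^+ 2 + 4 => b3 s4b; set qb := s / 4.
have qb2 : 2 < qb by rewrite /qb; lra.
split=> [|d|d]; rewrite /qform ?mul0r ?addr0 ?mul1r //=.
  by have := sqr_ge0 d.2; nra.
have disc : 0 <= s ^+ 2 - 16 * b ^+ 2.
  have -> : s ^+ 2 - 16 * b ^+ 2 = (s - 4 * b) * (s + 4 * b) by ring.
  by apply: mulr_ge0; lra.
have key : (qb - 2) * (qb * (d.1 - a * d.2) ^+ 2 + (- b * d.2) ^+ 2
                      - 2 * (d.1 ^+ 2 + qb * d.2 ^+ 2))
    = ((qb - 2) * d.1 - a * qb * d.2) ^+ 2 + (s ^+ 2 - 16 * b ^+ 2) / 8 * d.2 ^+ 2.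
  by rewrite /qb /s; field.
have : 0 <= (qb - 2) * (qb * (d.1 - a * d.2) ^+ 2 + (- b * d.2) ^+ 2
                        - 2 * (d.1 ^+ 2 + qb * d.2 ^+ 2)).
  by rewrite key addr_ge0 ?sqr_ge0 // mulr_ge0 ?sqr_ge0 ?divr_ge0.
rewrite pmulr_rge0 ?subr_gt0 //; lra.
Qed.

Lemma exists_expanding_qform (A B : int) :
  -1 <= A -> A <= B -> 2 <= B -> 2 * A < B + 3 ->
  exists qa qb k, expanding_qform A%:~R B%:~R qa qb k.
Proof.
move=> hA hAB hB h2A; have [AA_lt|AA_ge] := ltrP (A * A) (4 * B).
- do 3 eexists; apply: expanding_qform_disc_lt0; first by rewrite -(ler_int R) in hB.
  have : 1 <= 4 * B - A * A by lia.
  by rewrite -(ler_int R) intrB !intrM.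
- have A7 : 7 <= A by nia.
  do 3 eexists; apply: expanding_qform_disc_ge0.
  + have : 3 <= B by lia.
    by rewrite -(ler_int R).
  + have : 4 * B <= B * B - 2 * (A * A) + 4 by nia.
    by rewrite -(ler_int R) intrD intrB !intrM.
Qed.

End ExpandingQuadraticForm.

Lemma closed_sqr_approx (R : realType) (S : set (R * R)) y : closed S ->
  (forall e, 0 < e -> exists2 x, S x & (y - x).1 ^+ 2 + (y - x).2 ^+ 2 < e) ->
  S y.
Proof.
move=> S_closed approx; apply: S_closed => N /nbhs_ballP [e /= e0 yeN].
have [x Sx yx] := approx (e ^+ 2) (exprn_gt0 2 e0).
have lt_e d : d ^+ 2 < e ^+ 2 -> `|d| < e.
  by move=> de; rewrite ltr_norml; apply/andP; split; nra.
exists x; split => //; apply: yeN; rewrite /ball /= /prod_ball -!ball_normE /=.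
by split; apply: lt_e; have := sqr_ge0 (y - x).1; have := sqr_ge0 (y - x).2; lra.
Qed.

Section SubInvariantSet.
Variables (R : realType) (f : R * R -> R * R) (Q : R * R -> R) (k K : R).
Variables (D X Y : set (R * R)).
Hypothesis fB : forall y x, f (y - x) = f y - f x.
Hypothesis Q_expanding : forall d, 2 * Q d <= Q (f d).
Hypothesis k_gt0 : 0 < k.
Hypothesis Q_coercive : forall d, d.1 ^+ 2 + d.2 ^+ 2 <= k * Q d.
Hypothesis X_closed : closed X.
Hypothesis X_neq0 : X !=set0.
Hypothesis X_lift : forall x1 e, X x1 -> D e -> exists2 x, X x & f x = x1 + e.
Hypothesis Y_step : forall y, Y y -> exists y1 e, [/\ Y y1, D e & f y = y1 + e].
Hypothesis Q_YX_le : forall y x, Y y -> X x -> Q (y - x) <= K.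

Lemma sub_invariant_approx n y : Y y -> exists2 x, X x & Q (y - x) * 2 ^+ n <= K.
Proof.
elim: n y => [|n IHn] y Yy.
  by case: X_neq0 => x Xx; exists x; rewrite // expr0 mulr1 Q_YX_le.
have [y1 [e [Yy1 De fy]]] := Y_step Yy.
have [x1 Xx1 Qx1] := IHn y1 Yy1.
have [x Xx fx] := X_lift Xx1 De.
exists x => //; apply: le_trans Qx1.
have -> : y1 - x1 = f (y - x) by rewrite fB fy fx opprD addrACA subrr addr0.
by rewrite exprS mulrA (mulrC _ 2) ler_wpM2r ?exprn_ge0.
Qed.

Lemma sub_invariant_subset : Y `<=` X.
Proof.
move=> y Yy; apply: closed_sqr_approx => // e e0.
pose n := Num.bound (k * K / e).
have [x Xx Qx] := sub_invariant_approx n Yy.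
exists x => //; apply: le_lt_trans (Q_coercive _) _.
have n_gt : k * K / e < 2 ^+ n by exact: upper_nthrootP.
rewrite -(ltr_pM2r (exprn_gt0 n (ltr0Sn _ 1))) -mulrA.
apply: le_lt_trans (ler_wpM2l (ltW k_gt0) Qx) _.
by rewrite -ltr_pdivrMl // mulrC.
Qed.

End SubInvariantSet.

Lemma compact_coord_bound (R : realType) (S : set (R * R)) : compact S ->
  exists M, forall z, S z -> `|z.1| <= M /\ `|z.2| <= M.
Proof.
move=> /(@compact_bounded R ((R^o * R^o)%type)) [M [_ SM]].
exists (M + 1) => z Sz; have := SM (M + 1) ltac:(by rewrite ltrDl) z Sz.
by rewrite /= prod_normE ge_max => /andP.
Qed.

Section TileMaps.
Variables (R : realType) (A B : int).
Implicit Types (y z : R * R) (T Tl : set (R * R)).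

Lemma MmapE z : Mmap A B z = (- B%:~R * z.2, z.1 - A%:~R * z.2).
Proof. by rewrite /Mmap mul0r sub0r mulNr. Qed.

Lemma MmapB y z : Mmap A B (y - z) = Mmap A B y - Mmap A B z.
Proof. by rewrite !MmapE; congr pair => /=; ring. Qed.

Lemma gaffE z : gaff A B z = Mmap A B z + ((B%:~R - 1) / 2, 0).
Proof. by rewrite /gaff; congr pair; rewrite addr0. Qed.

Definition digits : set (R * R) :=
  [set e | exists2 j : int, 0 <= j <= B - 1 & e = (j%:~R, 0)].

(* [- tile_shift] is the fixed point of [gaff A B]. *)
Definition tile_shift : R * R :=
  let s := (1 - B%:~R) / (2 * (A%:~R + B%:~R + 1)) in ((A%:~R + 1) * s, s).

Definition sym_shift T : set (R * R) :=
  [set y | T (y - tile_shift) \/ T (tile_shift - y)].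

Hypotheses (A_ge : -1 <= A) (B_gt0 : 0 < B).

Lemma Mmap_tile_shift : Mmap A B tile_shift = tile_shift + ((B%:~R - 1) / 2, 0).
Proof.
have : (0 : R) < (A + B + 1)%:~R by rewrite ltr0z; lia.
rewrite !intrD => /lt0r_neq0 AB_neq0.
by rewrite MmapE; congr pair => /=; field.
Qed.

Lemma Tl_lift Tl : is_Tl A B Tl ->
  forall x1 e, Tl x1 -> digits e -> exists2 x, Tl x & Mmap A B x = x1 + e.
Proof.
case=> _ [_ Tl_eq] x1 _ Tlx1 [j /andP[j0 jB] ->].
have : (Mmap A B @` Tl) (transl j 0 x1).
  by rewrite Tl_eq; exists `|j|%N; rewrite gez0_abs // in_setE; split; last exists x1.
by case=> x Tlx xE; exists x; rewrite // xE gez0_abs.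
Qed.

Lemma sym_shift_step T : is_T A B T -> forall y, sym_shift T y ->
  exists y1 e, [/\ sym_shift T y1, digits e & Mmap A B y = y1 + e].
Proof.
case=> _ [_ T_eq]; rewrite /sym_shift.
move: tile_shift Mmap_tile_shift => w Mw.
have gaff_cases t : T t ->
    (exists2 j : int, 0 <= j <= B - 1 & T (gaff A B t - (j%:~R, 0))) \/
    T (- gaff A B t).
  move=> Tt; have : (gaff A B @` T) (gaff A B t) by exists t.
  rewrite T_eq => -[[j [jB]]|[t' Tt' <-]]; last by right; rewrite opprK.
  rewrite in_setE => -[t' Tt' <-]; left; exists j; first lia.
  by have -> : transl j 0 t' = t' + ((j%:Z)%:~R, 0) by []; rewrite addrK.
move=> y [Tu|Tt].
- have My : Mmap A B y = gaff A B (y - w) + w.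
    by rewrite gaffE MmapB Mw opprD !addrA !subrK.
  case: (gaff_cases _ Tu) => [[j jB Tj]|Tg].
  + exists (gaff A B (y - w) - (j%:~R, 0) + w), (j%:~R, 0).
    split; [by left; rewrite addrK | by exists j |].
    by rewrite My -addrA (addrC w) addrA addrNK.
  + exists (gaff A B (y - w) + w), 0.
    split; [right | exists 0 => //; lia | by rewrite addr0].
    by rewrite opprD addrCA subrr addr0.
- have My : Mmap A B y = w - gaff A B (w - y) + ((B - 1)%:~R, 0).
    rewrite gaffE MmapB Mw; move: (Mmap A B y) => m.
    by apply: injective_projections => /=; field.
  case: (gaff_cases _ Tt) => [[j jB Tj]|Tg].
  + exists (w - (gaff A B (w - y) - (j%:~R, 0))), ((B - 1 - j)%:~R, 0).
    split; [by right; rewrite subKr | exists (B - 1 - j) => //; lia |].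
    rewrite My; move: (gaff A B (w - y)) => g.
    by apply: injective_projections => /=; ring.
  + exists (w - gaff A B (w - y)), ((B - 1)%:~R, 0).
    by split; [left; rewrite addrAC subrr add0r | exists (B - 1) => //; lia |].
Qed.

Lemma sym_shift_subset_Tl (qa qb k : R) T Tl : is_T A B T -> is_Tl A B Tl ->
  expanding_qform A%:~R B%:~R qa qb k -> sym_shift T `<=` Tl.
Proof.
move=> hT hTl [k_gt0 Q_coercive Q_expanding].
have [MT MT_ge] := compact_coord_bound hT.2.1.
have [ML ML_ge] := compact_coord_bound hTl.2.1.
set w := tile_shift; pose r := MT + ML + `|w.1| + `|w.2|.
have dist_le (yi wi xi : R) : `|yi - wi| <= MT -> `|xi| <= ML ->
    `|wi| <= `|w.1| + `|w.2| -> `|yi - xi| <= r.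
  move=> yw x_le w_le; apply: le_trans (ler_distD wi _ _) _.
  by have := ler_normB wi xi; rewrite /r; lra.
apply: (sub_invariant_subset (f := Mmap A B) (Q := qform qa qb) (k := k)
  (K := r ^+ 2 * (1 + `|qa| + `|qb|)) (D := digits)) => //.
- exact: MmapB.
- by move=> d; rewrite MmapE.
- by apply: compact_closed hTl.2.1; exact: norm_hausdorff.
- exact: hTl.1.
- exact: Tl_lift.
- exact: sym_shift_step.
- move=> y x Yy /ML_ge[x1_le x2_le].
  have [y1_le y2_le] : `|y.1 - w.1| <= MT /\ `|y.2 - w.2| <= MT.
    by case: Yy => /MT_ge; rewrite /= ?(distrC y.1) ?(distrC y.2).
  have := normr_ge0 w.1; have := normr_ge0 w.2.
  by move=> ? ?; apply: qform_le_square; apply: dist_le => //; lra.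
Qed.

End TileMaps.

Lemma nbrl_of_shift (R : realType) (S Tl : set (R * R)) w (p q : int) z t :
  (forall u, S u -> Tl (u + w)) -> (p, q) != (0, 0) -> S z -> S t ->
  z = transl p q t -> (p, q) \in nbrl Tl.
Proof.
move=> STl pq_neq0 Sz St zE; rewrite in_setE; split => //.
exists (z + w); split; first exact: STl.
exists (t + w); first exact: STl.
by rewrite zE; apply: injective_projections => /=; ring.
Qed.

Theorem lemma3p2 (R : realType) (A B : int)
  (hA : -1 <= A) (hAB : A <= B) (hB : 2 <= B) (h2A : 2 * A < B + 3)
  (T Tl : set (R * R)%type)
  (hT : is_T A B T) (hTl : is_Tl A B Tl) :
  forall g, g \in nbr T ->
    (exists s, s \in nbrl Tl /\ gmap (R:=R) g = transl s.1 s.2)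
    \/ gmap (R:=R) g = cmap (R:=R)
    \/ (exists s, s \in nbrl Tl /\ gmap (R:=R) g = transl s.1 s.2 \o cmap (R:=R)).
Proof.
have [qa [qb [k Q_exp]]] := exists_expanding_qform R hA hAB hB h2A.
have B_gt0 : 0 < B by lia.
have Tl_sym u : T u \/ T (- u) -> Tl (u + tile_shift R A B).
  move=> Tu; apply: (sym_shift_subset_Tl hA B_gt0 hT hTl Q_exp).
  by rewrite /sym_shift /= addrK opprD addrCA subrr addr0.
move=> [[p q] []]; rewrite in_setE => -[g_neq [z [Tz [t Tt zE]]]].
- have [[-> ->]|pq_neq0] := eqVneq (p, q) (0, 0).
    by right; left; apply: funext => v; rewrite /= /transl !addr0.
  right; right; exists (p, q); split => //.
  apply: (nbrl_of_shift Tl_sym pq_neq0 (or_introl Tz)); last by rewrite -zE.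
  by right; rewrite opprK.
- left; exists (p, q); split => //.
  apply: (nbrl_of_shift (S := T) _ _ Tz Tt (esym zE)) => [u Tu|].
    exact: Tl_sym (or_introl Tu).
  by apply: contraNneq g_neq => -[-> ->].
Qed.
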